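(* Let $\Delta\ge3$. Given a proper $\Delta$-edge coloring with colors $1,\dots,\Delta$ and a solution of $\Pi^{\Delta}$ on a $\Delta$-regular graph, a solution of $\Pi^{\mathsf{orcx}}$ can be computed in $0$ rounds. Equivalently, $\Pi^{\Delta}\times\mathrm{EC}_\Delta\xrightarrow{0}\Pi^{\mathsf{orcx}}$, where $\mathrm{EC}_\Delta$ is the $\Delta$-edge coloring problem.
   Context: Node-edge-checkable problems $(\Sigma,\mathcal{N},\mathcal{E})$ label half-edges of a $\Delta$-regular graph. $\mathcal{N}$ lists the allowed multisets of the $\Delta$ labels around a node and $\mathcal{E}$ the allowed multisets of the $2$ labels on an edge. Relaxation. $\Pi\xrightarrow{0}\Pi'$ means there is a map $f$ with the following properties. For every $C\in\mathcal{N}_\Pi$ and position $j$, $f$ assigns a label $f(C,j)\in\Sigma_{\Pi'}$. The map must satisfy: - it maps node configurations to node configurations of $\Pi'$; - whenever the $j$-th entry of $C$ and the $j'$-th entry of $C'$ form an element of $\mathcal{E}_\Pi$, then $f(C,j)f(C',j')\in\mathcal{E}_{\Pi'}$. Product. $\Pi\times\Pi'$ has paired labels; node (resp. edge) configurations are those whose first and second coordinates form node (resp. edge) configurations of $\Pi$ and $\Pi'$, respectively. $\mathrm{EC}_\Delta$ has labels $\{1,\dots,\Delta\}$, node configuration $1\,2\cdots\Delta$, and edge configurations $i\,i$. $\Pi^{\Delta}$ has labels $(y,z)\in\{1,\dots,\Delta\}^2$ and node configurations $c\cdots c$ for each label $c$. Its edge configurations are the $(y,z)(y',z')$ such that at least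 one of the following holds: - (1) $y\ne1\ne z$, $y\ne y'$ and $z\ne z'$ (or symmetrically $y'\ne1\ne z'$, $y\ne y'$ and $z\ne z'$); - (2) $y=y'=1$, $z\ne1\ne z'$ and $z\ne z'$; - (3) $z=z'=1$, $y\ne1\ne y'$ and $y\ne y'$. $\Pi^{\mathsf{orcx}}$ has labels $\Sigma_1\cup\Sigma_2$ with $\Sigma_1=\{\mathsf O,\mathsf R,\mathsf C,\mathsf X\}$ and $\Sigma_2=\{\mathsf o,\mathsf r,\mathsf c,\mathsf x\}$. Its node configurations are the $L_1\dots L_\Delta$ such that: - exactly one $L_k$ lies in $\Sigma_1$; and - there are distinct $k,k'$ such that all other $L_{k''}\in\{\mathsf O,\mathsf o\}$, and either ($L_k\in\{\mathsf X,\mathsf x\}$ and $L_{k'}\in\{\mathsf O,\mathsf o\}$) or ($L_k\in\{\mathsf R,\mathsf r\}$ and $L_{k'}\in\{\mathsf C,\mathsf c\}$). Its edge configurations are all configurations in $[\mathsf O]\,[\mathsf O\mathsf R\mathsf C\mathsf X]$, $[\mathsf O\mathsf R]\,[\mathsf O\mathsf R]$, $[\mathsf O\mathsf C]\,[\mathsf O\mathsf C]$, $[\mathsf o]\,[\mathsf o\mathsf r\mathsf c\mathsf x]$ and $[\mathsf o\mathsf r]\,[\mathsf o\mathsf c]$, where $[XY]\,[ZW]$ means one entry is from the first set and the other from the second. *)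

From HB Require Import structures.
From mathcomp Require Import all_boot.
Set Implicit Arguments. Unset Strict Implicit. Unset Printing Implicit Defensive.

(** A node configuration is represented by a Delta-tuple of labels
    (a function 'I_D -> lab, position j = j-th half-edge); all node
    predicates defined below are permutation-invariant, so they describe
    multisets.  Edge predicates are symmetric (unordered pairs). *)
Record NEC (D : nat) := MkNEC {
  lab : finType;
  nodeC : pred {ffun 'I_D -> lab};
  edgeC : lab -> lab -> bool
}.
Arguments MkNEC {D}.
Arguments lab {D} _.
Arguments nodeC {D} _ _.
Arguments edgeC {D} _ _ _.

Definition relax0 (D : nat) (P Q : NEC D) : Prop :=
  exists f : {ffun 'I_D -> lab P} -> 'I_D -> lab Q,
    (forall C, nodeC P C -> nodeC Q [ffun j => f C j]) /\
    (forall C C' (j j' : 'I_D), nodeC P C -> nodeC P C' ->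
       edgeC P (C j) (C' j') -> edgeC Q (f C j) (f C' j')).

Definition prodNEC (D : nat) (P Q : NEC D) : NEC D :=
  MkNEC (lab P * lab Q)%type
    (fun C => nodeC P [ffun j => (C j).1] && nodeC Q [ffun j => (C j).2])
    (fun a b => edgeC P a.1 b.1 && edgeC Q a.2 b.2).

(** Colors 1..D are represented by 'I_D, label k standing for color k+1. *)
Definition isOne (D : nat) (y : 'I_D) : bool := val y == 0.

Definition EC (D : nat) : NEC D :=
  MkNEC ('I_D) (fun C => injectiveb C) (fun a b => a == b).

Definition PiD_edge (D : nat) (a b : 'I_D * 'I_D) : bool :=
  let: (y, z) := a in let: (y', z') := b in
  [|| [&& ~~ isOne y, ~~ isOne z, y != y' & z != z'],
      [&& ~~ isOne y', ~~ isOne z', y != y' & z != z'],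
      [&& isOne y, isOne y', ~~ isOne z, ~~ isOne z' & z != z']
    | [&& isOne z, isOne z', ~~ isOne y, ~~ isOne y' & y != y']].

Definition PiD (D : nat) : NEC D :=
  MkNEC ('I_D * 'I_D)%type
    (fun C => [exists c, forall j, C j == c])
    (@PiD_edge D).

Inductive letter := lO | lR | lC | lX.

Definition letter_to (l : letter) : 'I_4 :=
  match l with lO => inord 0 | lR => inord 1 | lC => inord 2 | lX => inord 3 end.
Definition letter_of (i : 'I_4) : option letter :=
  match val i with 0 => Some lO | 1 => Some lR | 2 => Some lC | 3 => Some lX
  | _ => None end.
Lemma letter_toK : pcancel letter_to letter_of.
Proof. by case; rewrite /letter_of /= inordK. Qed.
HB.instance Definition _ := Finite.copy letter (pcan_type letter_toK).

(** A label is a pair (b, l): b = true means the label is in Sigma_1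
    (upper case O R C X), b = false means Sigma_2 (lower case o r c x). *)
Definition orcx_lab := (bool * letter)%type.

Definition inOo (a : orcx_lab) := a.2 == lO.
Definition inXx (a : orcx_lab) := a.2 == lX.
Definition inRr (a : orcx_lab) := a.2 == lR.
Definition inCc (a : orcx_lab) := a.2 == lC.

Definition orcx_node (D : nat) (L : {ffun 'I_D -> orcx_lab}) : bool :=
  (#|[pred k | (L k).1]| == 1) &&
  [exists k, exists k', [&& k != k',
     [forall k'', ((k'' != k) && (k'' != k')) ==> inOo (L k'')] &
     ((inXx (L k) && inOo (L k')) || (inRr (L k) && inCc (L k')))]].

Definition orcx_edge_dir (a b : orcx_lab) : bool :=
  [|| (a == (true, lO)) && b.1,                                        (* [O][ORCX] *)
      [&& a.1, b.1, a.2 \in [:: lO; lR] & b.2 \in [:: lO; lR]],        (* [OR][OR] *)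
      [&& a.1, b.1, a.2 \in [:: lO; lC] & b.2 \in [:: lO; lC]],        (* [OC][OC] *)
      (a == (false, lO)) && ~~ b.1                                     (* [o][orcx] *)
    | [&& ~~ a.1, ~~ b.1, a.2 \in [:: lO; lR] & b.2 \in [:: lO; lC]]]. (* [or][oc] *)

Definition orcx_edge (a b : orcx_lab) : bool := orcx_edge_dir a b || orcx_edge_dir b a.

Definition Piorcx (D : nat) : NEC D :=
  MkNEC orcx_lab (@orcx_node D) orcx_edge.

From mathcomp Require Import all_boot.

Set Implicit Arguments.
Unset Strict Implicit.
Unset Printing Implicit Defensive.

(* A node sees one constant Pi^Delta label (y, z) and every colour exactly
   once, so it may label each half-edge from its colour alone.  The
   half-edge of colour 1 carries the unique upper-case letter: X if
   y = z = 1, R if only y = 1, C if only z = 1, O otherwise.  A half-edge of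
   colour c <> 1 gets r if c = y, c if c = z, x if c = y = z, o otherwise.
   The node constraint is checked by cases on y = 1, z = 1 and y = z
   (Delta >= 2 suffices).  Both ends of an edge see the same colour: on colour 1 the
   Pi^Delta edge constraint forces an O at one end, or R at both, or C at
   both; on any other colour it forbids both ends to single the colour out
   through the same coordinate, which leaves only o's and r-c pairs. *)

Definition upper_letter (y1 z1 : bool) : letter :=
  if y1 then (if z1 then lX else lR) else if z1 then lC else lO.

Definition lower_letter (ry rz : bool) : letter :=
  if ry then (if rz then lX else lR) else if rz then lC else lO.

Definition marks D (c i : 'I_D) : bool := ~~ isOne c && (i == c).

Definition orcx_label D (yz : 'I_D * 'I_D) (i : 'I_D) : orcx_lab :=
  if isOne i then (true, upper_letter (isOne yz.1) (isOne yz.2))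
  else (false, lower_letter (marks yz.1 i) (marks yz.2 i)).

(* Equality on [letter] goes through [inord] and does not reduce. *)
Definition letter_code (l : letter) : nat :=
  match l with lO => 0 | lR => 1 | lC => 2 | lX => 3 end.

Lemma letter_eqE (a b : letter) : (a == b) = (letter_code a == letter_code b).
Proof. by apply/eqP/eqP => [-> //|]; case: a; case: b. Qed.

Lemma orcx_edge_upper (y1 z1 y1' z1' : bool) :
    [|| ~~ y1 && ~~ z1, ~~ y1' && ~~ z1', [&& y1, y1', ~~ z1 & ~~ z1']
      | [&& z1, z1', ~~ y1 & ~~ y1']] ->
  orcx_edge (true, upper_letter y1 z1) (true, upper_letter y1' z1').
Proof.
case: y1 z1 y1' z1' => [] [] [] [];
  by rewrite /orcx_edge /orcx_edge_dir !inE !xpair_eqE /= !letter_eqE.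
Qed.

Lemma orcx_edge_lower (ry rz ry' rz' : bool) :
  ~~ (ry && ry') -> ~~ (rz && rz') ->
  orcx_edge (false, lower_letter ry rz) (false, lower_letter ry' rz').
Proof.
case: ry rz ry' rz' => [] [] [] [];
  by rewrite /orcx_edge /orcx_edge_dir !inE !xpair_eqE /= !letter_eqE.
Qed.

Section PiDEdge.
Variables (D : nat) (y z y' z' : 'I_D).
Hypothesis yzE : PiD_edge (y, z) (y', z').

Lemma PiD_edge_isOne :
  [|| ~~ isOne y && ~~ isOne z, ~~ isOne y' && ~~ isOne z',
      [&& isOne y, isOne y', ~~ isOne z & ~~ isOne z']
    | [&& isOne z, isOne z', ~~ isOne y & ~~ isOne y']].
Proof.
move: yzE; rewrite /PiD_edge.
by case: (isOne y) (isOne z) (isOne y') (isOne z') => [] [] [] [].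
Qed.

Lemma PiD_edge_eq_fst : (y == y') ==> isOne y.
Proof.
move: yzE; rewrite /PiD_edge; have [<-|//] := eqVneq y y'.
by rewrite !andbF /= orbF => /andP[].
Qed.

Lemma PiD_edge_eq_snd : (z == z') ==> isOne z.
Proof.
move: yzE; rewrite /PiD_edge; have [<-|//] := eqVneq z z'.
by rewrite !andbF /= => /andP[].
Qed.

End PiDEdge.

Lemma marks_twice D (c c' i : 'I_D) :
  (c == c') ==> isOne c -> ~~ (marks c i && marks c' i).
Proof.
move=> cc'; apply/negP => /andP[/andP[c1 /eqP ic] /andP[_ /eqP ic']].
by move: c1 cc'; rewrite -ic -ic' eqxx => /negbTE ->.
Qed.

Lemma orcx_label_edge D (yz yz' : 'I_D * 'I_D) (i : 'I_D) :
  PiD_edge yz yz' -> orcx_edge (orcx_label yz i) (orcx_label yz' i).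
Proof.
case: yz yz' => [y z] [y' z'] E; rewrite /orcx_label /=; case: ifP => _.
- exact/orcx_edge_upper/(PiD_edge_isOne E).
- by apply: orcx_edge_lower; apply: marks_twice;
    [apply: PiD_edge_eq_fst E | apply: PiD_edge_eq_snd E].
Qed.

Lemma orcx_node_intro D (L : 'I_D -> orcx_lab) (k k' : 'I_D) :
    #|[pred i | (L i).1]| = 1 -> k != k' ->
    (forall i, i != k -> i != k' -> (L i).2 = lO) ->
    ((L k).2, (L k').2) = (lX, lO) \/ ((L k).2, (L k').2) = (lR, lC) ->
  orcx_node [ffun i => L i].
Proof.
move=> upper1 kk' others pair; apply/andP; split.
  by apply/eqP; rewrite -upper1; apply: eq_card => i; rewrite !inE ffunE.
apply/existsP; exists k; apply/existsP; exists k'; rewrite !ffunE kk' /=.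
apply/andP; split.
  apply/forallP => i; rewrite ffunE; apply/implyP => /andP[ik ik'].
  by rewrite /inOo others.
by rewrite /inXx /inOo /inRr /inCc; case: pair => -[-> ->]; rewrite !eqxx ?orbT.
Qed.

Lemma orcx_node_reindex D (s : 'I_D -> 'I_D) (L : {ffun 'I_D -> orcx_lab}) :
  injective s -> orcx_node L -> orcx_node [ffun i => L (s i)].
Proof.
move=> s_inj /andP[/eqP upper1].
case/existsP=> k /existsP[k' /and3P[kk' /forallP others pair]].
have sK := f_invF s_inj; pose t := invF s_inj.
apply: (@orcx_node_intro _ _ (t k) (t k')); rewrite ?sK.
- rewrite -upper1 (card_preim s_inj [pred i | (L i).1]).
  by apply: eq_card => i; rewrite !inE injF_onto.
- by rewrite (inj_eq (can_inj sK)).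
- move=> i ik ik'; apply/eqP/(implyP (others (s i))).
  by rewrite -(sK k) -(sK k') !(inj_eq s_inj) ik ik'.
- by case/orP: pair => /andP[/eqP-> /eqP->]; [left | right].
Qed.

Section CanonicalNode.
Variables (D : nat) (y z : 'I_D).
Hypothesis D_gt1 : 1 < D.

Let i0 : 'I_D := Ordinal (ltnW D_gt1).
Let i1 : 'I_D := Ordinal D_gt1.

Let isOneE i : isOne i = (i == i0). Proof. by []. Qed.

Let label_i0 : orcx_label (y, z) i0 = (true, upper_letter (isOne y) (isOne z)).
Proof. by rewrite /orcx_label isOneE eqxx. Qed.

Let label_other i : ~~ isOne i ->
  orcx_label (y, z) i = (false, lower_letter (marks y i) (marks z i)).
Proof. by rewrite /orcx_label => /negbTE ->. Qed.

Lemma orcx_node_label : orcx_node [ffun i => orcx_label (y, z) i].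
Proof.
have upper1 : #|[pred i | (orcx_label (y, z) i).1]| = 1.
  rewrite -(card1 i0); apply: eq_card => i.
  by rewrite !inE /orcx_label isOneE; case: ifP.
case: (boolP (isOne y)) => y1; case: (boolP (isOne z)) => z1.
- apply: (orcx_node_intro (k := i0) (k' := i1)) => //.
  + by move=> i ii0 _; rewrite label_other // /marks y1 z1.
  + by rewrite label_i0 label_other // /marks y1 z1; left.
- apply: (orcx_node_intro (k := i0) (k' := z)) => //.
  + by rewrite eq_sym.
  + by move=> i ii0 iz; rewrite label_other // /marks y1 (negbTE iz) andbF.
  + by rewrite label_i0 label_other // /marks y1 (negbTE z1) eqxx; right.
- apply: (orcx_node_intro (k := y) (k' := i0)) => //.
  + by move=> i iy ii0; rewrite label_other // /marks z1 (negbTE iy) andbF.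
  + by rewrite label_i0 label_other // /marks (negbTE y1) z1 eqxx; right.
have [yz|yz] := eqVneq y z.
- apply: (orcx_node_intro (k := y) (k' := i0)) => //.
  + by move=> i iy ii0; rewrite label_other // /marks -yz (negbTE iy) andbF.
  + by rewrite label_i0 label_other // /marks -yz (negbTE y1) eqxx; left.
- apply: (orcx_node_intro (k := y) (k' := z)) => //.
  + move=> i iy iz; have [->|ii0] := eqVneq i i0.
      by rewrite label_i0 (negbTE y1) (negbTE z1).
    by rewrite label_other // /marks (negbTE iy) (negbTE iz) !andbF.
  + rewrite !label_other // /marks (negbTE y1) (negbTE z1) !eqxx.
    by rewrite (negbTE yz) eq_sym (negbTE yz); right.
Qed.

End CanonicalNode.

Theorem mainTheorem17 (D : nat) (hD : 3 <= D) :
  relax0 (prodNEC (PiD D) (EC D)) (Piorcx D).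
Proof.
exists (fun C j => orcx_label (C j).1 (C j).2); split.
- move=> C /andP[/existsP[[y z] /forallP constC] /injectiveP colC] /=.
  have -> : [ffun j => orcx_label (C j).1 (C j).2]
          = [ffun j => [ffun i => orcx_label (y, z) i] (C j).2].
    by apply/ffunP => j; move: (constC j); rewrite !ffunE => /eqP ->.
  apply: orcx_node_reindex; last exact: orcx_node_label (ltnW hD).
  by move=> j j' cjj'; apply: colC; rewrite !ffunE.
- move=> C C' j j' _ _ /andP[yzE /eqP ->].
  exact: orcx_label_edge.
Qed.
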